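(* Assume condition $( * )$ with $n_0=1$ and let $\lambda\in(0,1]$. There exists $K>0$ such that for all $f\in\mathcal L_1$ and $t\in\mathbb R$, $\|Q(t)f-Qf\|_3\le K|t|\,\|f\|_1$.
   Context: Setting: $(E,d)$ non-compact metric space with compact closed balls, $x_0\in E$; $G$ a semigroup of Lipschitz maps of $E$ acting measurably; $c(g)=\sup_{x\ne y}d(gx,gy)/d(x,y)$, $\Gamma(g)=1+c(g)+d(gx_0,x_0)$; $\pi$ a probability on $G$, $Qf(x)=\int_G f(gx)\,d\pi(g)$. Condition $( * )$ with $n_0=1$: $\int_G\Gamma^3(1+c^{1/2})\,d\pi<\infty$ and $\int_G c^{1/2}\max\{c,1\}^3\,d\pi<1$. $\xi:E\to\mathbb R$ is Lipschitz: $|\xi(x)-\xi(y)|\le Cd(x,y)$. $Q(t)f(x)=\int_G e^{it\xi(gx)}f(gx)\,d\pi(g)$. For $\lambda\in(0,1]$, $p_\lambda(x)=1+\lambda d(x,x_0)^{1/2}$. For $\gamma>0$, $\mathcal L_\gamma$ is the Banach space of $f:E\to\mathbb C$ with $m_\gamma(f)=\sup_{x\ne y}\frac{|f(x)-f(y)|}{d(x,y)^{1/2}p_\lambda(x)^\gamma p_\lambda(y)^\gamma}<\infty$, with norm $\|f\|_\gamma=m_\gamma(f)+|f|_\gamma$, $|f|_\gamma=\sup_x|f(x)|/p_\lambda(x)^{\gamma+1}$. *)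

From HB Require Import structures.
From mathcomp Require Import all_boot all_order all_algebra.
From mathcomp Require Import all_classical all_reals all_analysis.
From mathcomp Require Import complex.
Set Implicit Arguments. Unset Strict Implicit. Unset Printing Implicit Defensive.
Import Order.TTheory GRing.Theory Num.Theory.
Local Open Scope classical_set_scope.
Local Open Scope ring_scope.

Section Defs.
Context {R : realType} {E : pointedType}.
Variable d : E -> E -> R.

Definition is_metric : Prop :=
  [/\ (forall x y, 0 <= d x y),
      (forall x y, d x y = 0 <-> x = y),
      (forall x y, d x y = d y x) &
      (forall x y z, d x z <= d x y + d y z)].

Definition dopen (A : set E) : Prop :=
  forall x, A x -> exists e : R, 0 < e /\ [set y | d x y < e] `<=` A.

Definition dcompact (K : set E) : Prop :=
  forall (I : Type) (U : I -> set E), (forall i, dopen (U i)) ->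
    K `<=` \bigcup_i U i ->
    exists F : set I, finite_set F /\ K `<=` \bigcup_(i in F) U i.

Definition closed_ball (x : E) (r : R) : set E := [set y | d x y <= r].

Definition compact_closed_balls : Prop :=
  forall x r, dcompact (closed_ball x r).

Definition dlipschitz (h : E -> E) : Prop :=
  exists C : R, forall x y, d (h x) (h y) <= C * d x y.

Definition lipc (h : E -> E) : R :=
  sup [set r | exists x y, x <> y /\ r = d (h x) (h y) / d x y].

Definition plam (x0 : E) (lam : R) (x : E) : R := 1 + lam * Num.sqrt (d x x0).

Definition cmod (z : R[i]) : R := Normc.normc z.

Definition mgam (x0 : E) (lam gam : R) (f : E -> R[i]) : \bar R :=
  ereal_sup [set r | exists x y, x <> y /\ r = ((cmod (f x - f y)) /
      (Num.sqrt (d x y) * (plam x0 lam x `^ gam) * (plam x0 lam y `^ gam)))%:E].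

Definition absgam (x0 : E) (lam gam : R) (f : E -> R[i]) : \bar R :=
  ereal_sup [set (cmod (f x) / plam x0 lam x `^ (gam + 1))%:E | x in [set: E]].

Definition normL (x0 : E) (lam gam : R) (f : E -> R[i]) : \bar R :=
  (mgam x0 lam gam f + absgam x0 lam gam f)%E.

Definition inL (x0 : E) (lam gam : R) (f : E -> R[i]) : Prop :=
  (normL x0 lam gam f < +oo)%E.

End Defs.

Notation borelE d := (g_sigma_algebraType (dopen d)).

Section Ops.
Context {R : realType} {E : pointedType} {dG : measure_display}
  {G : measurableType dG}.
Variables (d : E -> E -> R) (act : G -> E -> E) (P : probability G R).

Definition Gam (x0 : E) (g : G) : R := 1 + lipc d (act g) + d (act g x0) x0.

Definition Cint (h : G -> R[i]) : R[i] :=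
  Complex (\int[P]_g (complex.Re (h g))) (\int[P]_g (complex.Im (h g))).

Definition expi (u : R) : R[i] := Complex (cos u) (sin u).

Definition Qop (f : E -> R[i]) : E -> R[i] :=
  fun x => Cint (fun g => f (act g x)).

Definition Qt (xi : E -> R) (t : R) (f : E -> R[i]) : E -> R[i] :=
  fun x => Cint (fun g => (expi (t * xi (act g x)) * f (act g x))%R).

End Ops.

(* Q(t) f - Q f = Q u with u = (e^{i t xi} - 1) f.  For f in L_1, i.e.
   |f| <= a p^2 and |f(z) - f(w)| <= m d(z,w)^{1/2} p(z) p(w), the Lipschitz
   bound on xi gives |xi| = O(p^2), hence |u| = O(|t| a p^4).  Splitting
   u(z) - u(w) = (e(z) - 1)(f(z) - f(w)) + (e(z) - e(w)) f(w) and using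
   d(z,w) <= 2 p(z) p(w) d(z,w)^{1/2} / lambda yields the weighted 1/2-Hoelder
   bound O(|t| (m + a)) d(z,w)^{1/2} (p(z) p(w))^3.  A map g multiplies p by at
   most 1 + c(g)^{1/2} + d(g x0, x0)^{1/2}, whose square is at most 3 Gamma(g),
   and d^{1/2} by at most c(g)^{1/2}; so both bounds, transported by g, are
   dominated by Gamma(g)^3 (1 + c(g)^{1/2}) times the weights of L_3, which is
   integrable by the first half of condition (star).  Measurability of
   g |-> u(g x) comes from the local Hoelder continuity of u.
   Non-compactness is only used to get two distinct points. *)

From HB Require Import structures.
From mathcomp Require Import all_boot all_order all_algebra.
From mathcomp Require Import all_classical all_reals all_analysis.
From mathcomp Require Import complex.
From mathcomp Require Import ring lra.
Set Implicit Arguments. Unset Strict Implicit. Unset Printing Implicit Defensive.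
Import Order.TTheory GRing.Theory Num.Theory.
Import numFieldTopology.Exports numFieldNormedType.Exports.
Local Open Scope classical_set_scope.
Local Open Scope ring_scope.

Section ComplexModulus.
Context {R : realType}.
Implicit Types (a b : R) (z w : R[i]).

Lemma cmod_ge0 z : 0 <= cmod z.
Proof. by case: z => a b; rewrite /cmod /= sqrtr_ge0. Qed.

Lemma normr_Re_le z : `|complex.Re z| <= cmod z.
Proof.
case: z => a b; rewrite /cmod /= -sqrtr_sqr ler_wsqrtr //.
by rewrite lerDl sqr_ge0.
Qed.

Lemma normr_Im_le z : `|complex.Im z| <= cmod z.
Proof.
case: z => a b; rewrite /cmod /= -sqrtr_sqr ler_wsqrtr //.
by rewrite lerDr sqr_ge0.
Qed.

Lemma cmod_Complex_le a b : cmod (Complex a b) <= `|a| + `|b|.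
Proof.
rewrite /cmod /= -[X in _ <= X]ger0_norm ?addr_ge0 // -sqrtr_sqr ler_wsqrtr //.
rewrite sqrrD !real_normK ?num_real // lerD2r lerDl.
by apply: mulrn_wge0; apply: mulr_ge0.
Qed.

Lemma cmodD z w : cmod (z + w) <= cmod z + cmod w.
Proof. exact: le_normcD. Qed.

Lemma cmodM z w : cmod (z * w) = cmod z * cmod w.
Proof. exact: Normc.normcM. Qed.

Lemma cmod_expi a : cmod (expi a) = 1.
Proof. by rewrite /cmod /expi /= cos2Dsin2 sqrtr1. Qed.

Lemma normB_le_of_deriv (f df : R -> R) a b :
  (forall x : R, is_derive x (1 : R) f (df x)) -> (forall x, `|df x| <= 1) ->
  `|f a - f b| <= `|a - b|.
Proof.
move=> f_df df1; wlog ab : a b / a <= b.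
  by move=> H; have [/H//|/ltW/H] := leP a b; rewrite distrC [`|b - a|]distrC.
rewrite distrC [`|a - b|]distrC.
have [|c _ ->] := MVT_segment ab (fun x _ => f_df x).
  apply/continuous_subspaceT => x.
  by apply/differentiable_continuous/derivable1_diffP; exact: ex_derive.
by rewrite normrM ler_piMl.
Qed.

Lemma cmod_expiB a b : cmod (expi a - expi b) <= 2 * `|a - b|.
Proof.
apply: le_trans (cmod_Complex_le _ _) _; rewrite mulr2n mulrDl mul1r.
apply: lerD.
- by apply: (@normB_le_of_deriv _ (fun x => - sin x)) => x;
    rewrite ?normrN ?sin_max.
- by apply: (@normB_le_of_deriv _ cos) => x; rewrite ?cos_max.
Qed.

Lemma cmod_expi_sub1 a : cmod (expi a - 1) <= 2 * `|a|.
Proof.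
have -> : 1 = expi 0 :> R[i] by rewrite /expi cos0 sin0.
by rewrite (le_trans (cmod_expiB _ _)) // subr0.
Qed.

End ComplexModulus.

Lemma sqrtrD_le {R : rcfType} (a b : R) : 0 <= a -> 0 <= b ->
  Num.sqrt (a + b) <= Num.sqrt a + Num.sqrt b.
Proof.
move=> a0 b0; rewrite -[X in _ <= X]ger0_norm ?addr_ge0 ?sqrtr_ge0 //.
rewrite -sqrtr_sqr ler_wsqrtr // sqrrD !sqr_sqrtr // lerD2r lerDl.
by apply: mulrn_wge0; apply: mulr_ge0; apply: sqrtr_ge0.
Qed.

Section DominatedIntegral.
Context d (T : measurableType d) (R : realType).
Variable mu : {measure set T -> \bar R}.

(* [f2] need not be measurable (the dominating function built from [lipc] in
   condition (star) is not known to be): nonnegative integrals are suprema over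
   simple functions below the integrand. *)
Lemma nonneg_le_integral (f1 f2 : T -> \bar R) :
  (forall x, (0 <= f1 x)%E) -> (forall x, (f1 x <= f2 x)%E) ->
  (\int[mu]_x f1 x <= \int[mu]_x f2 x)%E.
Proof.
move=> f10 f12; have f20 x : (0 <= f2 x)%E by apply: le_trans (f10 x) (f12 x).
rewrite !ge0_integralTE //; apply: ereal_sup_le => _ [h hf <-].
by exists h => // x; apply: le_trans (hf x) (f12 x).
Qed.

Variables (H : T -> R) (I : R).
Hypothesis H_ge0 : forall x, 0 <= H x.
Hypothesis integral_H : (\int[mu]_x (H x)%:E = I%:E)%E.

Lemma dominating_integral_ge0 : 0 <= I.
Proof.
by rewrite -lee_fin -integral_H integral_ge0 // => x _; rewrite lee_fin.
Qed.

Variables (F : T -> R) (k : R).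
Hypothesis mF : measurable_fun setT F.
Hypothesis k_ge0 : 0 <= k.
Hypothesis F_le : forall x, `|F x| <= k * H x.

Lemma dominated_integral_abs_le : (\int[mu]_x (`|F x|)%:E <= (k * I)%:E)%E.
Proof.
have [k_gt0|k_le0] := ltP 0 k; last first.
  have k0 : k = 0 by apply/le_anti; rewrite k_le0 k_ge0.
  rewrite k0 mul0r integral0_eq // => x _.
  by have := F_le x; rewrite k0 mul0r normr_le0 => /eqP ->; rewrite normr0.
have mFk : measurable_fun setT (fun x => `|F x| / k).
  apply: measurable_realfun.measurable_funM; last exact: measurable_cst.
  exact: measurableT_comp.
rewrite (eq_integral (fun x => k%:E * (`|F x| / k)%:E)%E); last first.
  by move=> x _; rewrite -EFinM mulrCA divff ?gt_eqF // mulr1.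
rewrite ge0_integralZl_EFin //; first last.
- exact/measurable_realfun.measurable_EFinP.
- by move=> x _; rewrite lee_fin divr_ge0.
rewrite EFinM lee_wpmul2l ?lee_fin // -integral_H.
apply: nonneg_le_integral => x; rewrite lee_fin ?divr_ge0 //.
by rewrite ler_pdivrMr // mulrC F_le.
Qed.

Lemma dominated_integrable : mu.-integrable setT (EFin \o F).
Proof.
apply/integrableP; split; first exact/measurable_realfun.measurable_EFinP.
under eq_integral do rewrite abse_EFin.
exact: le_lt_trans dominated_integral_abs_le (ltry _).
Qed.

Lemma dominated_Rintegral_le : `|Rintegral mu setT F| <= k * I.
Proof.
apply: le_trans (le_normr_Rintegral _ dominated_integrable) _ => //.
rewrite -lee_fin /Rintegral fineK ?dominated_integral_abs_le //.
by rewrite ge0_fin_numE ?integral_ge0 ?(le_lt_trans dominated_integral_abs_le) ?ltry.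
Qed.

End DominatedIntegral.

Section ComplexIntegral.
Context {R : realType} {dG : measure_display} {G : measurableType dG}.
Variables (P : probability G R) (H : G -> R) (I : R).
Hypothesis integral_H : (\int[P]_g (H g)%:E = I%:E)%E.

Definition measurable_parts (h : G -> R[i]) :=
  measurable_fun setT (fun g => complex.Re (h g)) /\
  measurable_fun setT (fun g => complex.Im (h g)).

Lemma measurable_partsD h1 h2 : measurable_parts h1 -> measurable_parts h2 ->
  measurable_parts (fun g => h1 g + h2 g).
Proof.
move=> [mRe1 mIm1] [mRe2 mIm2].
split; [rewrite (_ : (fun g => _) = fun g => complex.Re (h1 g) + complex.Re (h2 g))
       | rewrite (_ : (fun g => _) = fun g => complex.Im (h1 g) + complex.Im (h2 g))];
  try by apply: funext => g; rewrite raddfD.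
- exact: measurable_realfun.measurable_funD.
- exact: measurable_realfun.measurable_funD.
Qed.

Lemma measurable_partsB h1 h2 : measurable_parts h1 -> measurable_parts h2 ->
  measurable_parts (fun g => h1 g - h2 g).
Proof.
move=> [mRe1 mIm1] [mRe2 mIm2].
split; [rewrite (_ : (fun g => _) = fun g => complex.Re (h1 g) - complex.Re (h2 g))
       | rewrite (_ : (fun g => _) = fun g => complex.Im (h1 g) - complex.Im (h2 g))];
  try by apply: funext => g; rewrite raddfB.
- exact: measurable_realfun.measurable_funB.
- exact: measurable_realfun.measurable_funB.
Qed.

Definition dominated (h : G -> R[i]) :=
  exists2 k, 0 <= k & forall g, cmod (h g) <= k * H g.

Lemma dominated_integrable_parts h : measurable_parts h -> dominated h ->
  P.-integrable setT (EFin \o (fun g => complex.Re (h g))) /\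
  P.-integrable setT (EFin \o (fun g => complex.Im (h g))).
Proof.
move=> [mRe mIm] [k k0 hk].
split; apply: (dominated_integrable integral_H _ k0) => // g.
- exact: le_trans (normr_Re_le _) (hk g).
- exact: le_trans (normr_Im_le _) (hk g).
Qed.

Lemma CintB h1 h2 : measurable_parts h1 -> dominated h1 ->
  measurable_parts h2 -> dominated h2 ->
  Cint P h1 - Cint P h2 = Cint P (fun g => h1 g - h2 g).
Proof.
move=> m1 d1 m2 d2; have [iRe1 iIm1] := dominated_integrable_parts m1 d1.
have [iRe2 iIm2] := dominated_integrable_parts m2 d2.
rewrite /Cint; congr Complex; rewrite -RintegralB //;
  by apply: eq_Rintegral => g _; rewrite raddfB.
Qed.

Lemma cmod_Cint_le h k : measurable_parts h -> 0 <= k ->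
  (forall g, cmod (h g) <= k * H g) -> cmod (Cint P h) <= 2 * k * I.
Proof.
move=> [mRe mIm] k0 hk; apply: le_trans (cmod_Complex_le _ _) _.
rewrite -mulrA mulr2n mulrDl mul1r.
apply: lerD; apply: (dominated_Rintegral_le integral_H _ k0) => // g.
- exact: le_trans (normr_Re_le _) (hk g).
- exact: le_trans (normr_Im_le _) (hk g).
Qed.

End ComplexIntegral.

Section Metric.
Context {R : realType} {E : pointedType} (d : E -> E -> R).
Hypothesis d_metric : is_metric d.

Lemma d_ge0 x y : 0 <= d x y. Proof. by case: d_metric. Qed.
Lemma d_sym x y : d x y = d y x. Proof. by case: d_metric. Qed.
Lemma d_triangle x y z : d x z <= d x y + d y z. Proof. by case: d_metric. Qed.
Lemma d_xx x : d x x = 0. Proof. by case: d_metric => _ dP _ _; apply/dP. Qed.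

Lemma d_gt0 x y : x <> y -> 0 < d x y.
Proof.
move=> xy; rewrite lt_def d_ge0 andbT; apply/eqP => dxy.
by case: d_metric => _ dP _ _; apply/xy/dP.
Qed.

Lemma locally_holder_measurable (phi : E -> R) :
  (forall z, exists M, forall y, d z y <= 1 ->
     `|phi y - phi z| <= M * Num.sqrt (d z y)) ->
  @measurable_fun _ _ (borelE d) R setT phi.
Proof.
move=> phi_holder.
apply: (measurability _ (measurable_realfun.RGenInftyO.measurableE R)) => //.
move=> _ [_ [a ->] <-]; apply: sub_sigma_algebra; rewrite setTI.
move=> z /=; rewrite in_itv /= => za.
have [M HM] := phi_holder z.
set eps := a - phi z; set M' := `|M| + 1.
have eps0 : 0 < eps by rewrite subr_gt0.
have M'0 : 0 < M' by rewrite ltr_wpDl.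
exists (Num.min 1 ((eps / M') ^+ 2)); split.
  by rewrite lt_min ltr01 exprn_gt0 // divr_gt0.
move=> y /=; rewrite lt_min in_itv /= => /andP[dy1 dy_eps].
have sqrt_d_lt : Num.sqrt (d z y) < eps / M'.
  rewrite -(ger0_norm (ltW (divr_gt0 eps0 M'0))) -sqrtr_sqr ltr_sqrt //.
  by rewrite exprn_gt0 // divr_gt0.
suff : phi y - phi z < eps by rewrite /eps ltrBrDr subrK.
apply: le_lt_trans (ler_norm _) _; apply: le_lt_trans (HM y (ltW dy1)) _.
apply: le_lt_trans (_ : M' * Num.sqrt (d z y) < eps).
  by rewrite ler_wpM2r ?sqrtr_ge0 // (le_trans (ler_norm _)) // lerDl.
by rewrite -ltr_pdivlMl // mulrC.
Qed.

Lemma noncompact_two_points : ~ dcompact d setT -> exists x y : E, x <> y.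
Proof.
move=> noncompact; apply: contrapT => single; apply: noncompact => I U _ cover.
have [i _ Ui] := cover point Logic.I.
exists [set i]; split; first exact: finite_set1.
move=> y _; exists i => //; suff -> : y = point by [].
by apply: contrapT => y_point; apply: single; exists y, point.
Qed.

Variable h : E -> E.
Hypothesis h_lip : dlipschitz d h.

Lemma lipc_le x y : d (h x) (h y) <= lipc d h * d x y.
Proof.
have [<-|xy] := pselect (x = y); first by rewrite !d_xx mulr0.
have [C hC] := h_lip.
rewrite -ler_pdivrMr ?d_gt0 //; apply: ub_le_sup; last by exists x, y.
by exists C => _ [u [v [uv ->]]]; rewrite ler_pdivrMr ?d_gt0.
Qed.

Lemma lipc_ge0 : (exists x y : E, x <> y) -> 0 <= lipc d h.
Proof.
move=> [x [y xy]]; rewrite -(pmulr_lge0 _ (d_gt0 xy)).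
exact: le_trans (d_ge0 _ _) (lipc_le x y).
Qed.

End Metric.

Lemma sqr_add3_le {R : realFieldType} (s q : R) :
  (1 + s + q) ^+ 2 <= 3 * (1 + s ^+ 2 + q ^+ 2).
Proof.
have -> : 3 * (1 + s ^+ 2 + q ^+ 2) =
    (1 + s + q) ^+ 2 + ((1 - s) ^+ 2 + (1 - q) ^+ 2 + (s - q) ^+ 2) by ring.
by rewrite lerDl !addr_ge0 ?sqr_ge0.
Qed.

Section Weight.
Context {R : realType} {E : pointedType} (d : E -> E -> R) (x0 : E) (lam : R).
Hypothesis d_metric : is_metric d.
Hypothesis lam01 : 0 < lam <= 1.
Local Notation p := (plam d x0 lam).

Let lam_gt0 : 0 < lam. Proof. by case/andP: lam01. Qed.
Let lam_le1 : lam <= 1. Proof. by case/andP: lam01. Qed.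
Let d_ge0 := d_ge0 d_metric.
Let d_sym := d_sym d_metric.

Lemma plam_ge1 z : 1 <= p z.
Proof. by rewrite /plam lerDl mulr_ge0 ?sqrtr_ge0 ?ltW. Qed.

Lemma plam_gt0 z : 0 < p z.
Proof. exact: lt_le_trans ltr01 (plam_ge1 z). Qed.

Lemma powR_plam z n : p z `^ n%:R = p z ^+ n.
Proof. by rewrite powR_mulrn // ltW // plam_gt0. Qed.

Lemma sqrt_d_le_plam z : lam * Num.sqrt (d z x0) <= p z.
Proof. by rewrite /plam lerDr. Qed.

Lemma sqrt_d_le_plamM z w : lam * Num.sqrt (d z w) <= 2 * (p z * p w).
Proof.
have sqrt_tri : Num.sqrt (d z w) <= Num.sqrt (d z x0) + Num.sqrt (d w x0).
  apply: le_trans _ (sqrtrD_le (d_ge0 _ _) (d_ge0 _ _)).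
  by rewrite ler_wsqrtr // [d w x0]d_sym (d_triangle d_metric).
have := sqrt_d_le_plam z; have := sqrt_d_le_plam w.
have := plam_ge1 z; have := plam_ge1 w.
have : lam * Num.sqrt (d z w) <= lam * (Num.sqrt (d z x0) + Num.sqrt (d w x0)).
  by rewrite ler_pM2l.
nra.
Qed.

Lemma plam_near z y : d z y <= 1 -> p y <= p z + 1.
Proof.
move=> dzy; rewrite /plam -addrA lerD2l.
have sqrt_dzy : Num.sqrt (d z y) <= 1 by rewrite -sqrtr1 ler_wsqrtr.
have : Num.sqrt (d y x0) <= Num.sqrt (d z y) + Num.sqrt (d z x0).
  apply: le_trans _ (sqrtrD_le (d_ge0 _ _) (d_ge0 _ _)).
  by rewrite ler_wsqrtr // [d z y]d_sym (d_triangle d_metric).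
have := sqrtr_ge0 (d z x0); have := sqrtr_ge0 (d y x0).
have := lam_gt0; have := lam_le1; nra.
Qed.

Lemma weighted_holder_measurable (phi : E -> R) (K : R) (n : nat) :
  (forall z w, `|phi z - phi w| <= K * (Num.sqrt (d z w) * (p z * p w) ^+ n)) ->
  @measurable_fun _ _ (borelE d) R setT phi.
Proof.
move=> phi_holder; apply: locally_holder_measurable => z.
have p_ge0 w : 0 <= p w by rewrite ltW // plam_gt0.
exists (`|K| * (p z * (p z + 1)) ^+ n) => y dzy.
rewrite distrC (le_trans (phi_holder z y)) //.
apply: le_trans (_ : `|K| * (Num.sqrt (d z y) * (p z * p y) ^+ n) <= _).
  by apply: ler_wpM2r; rewrite ?ler_norm // mulr_ge0 ?sqrtr_ge0 ?exprn_ge0 ?mulr_ge0.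
rewrite -mulrA [_ * Num.sqrt _]mulrC; apply: ler_wpM2l => //.
have pzy0 : 0 <= p z * p y := mulr_ge0 (p_ge0 z) (p_ge0 y).
have pz10 : 0 <= p z * (p z + 1) := mulr_ge0 (p_ge0 z) (addr_ge0 (p_ge0 z) ler01).
apply: ler_pM; rewrite ?sqrtr_ge0 ?exprn_ge0 //.
rewrite lerXn2r ?nnegrE //.
exact: ler_wpM2l (p_ge0 z) _ _ (plam_near dzy).
Qed.

Variables (h : E -> E) (c : R).
Hypothesis c_ge0 : 0 <= c.
Hypothesis h_lip : forall x y, d (h x) (h y) <= c * d x y.

Lemma sqrt_d_map x y :
  Num.sqrt (d (h x) (h y)) <= Num.sqrt c * Num.sqrt (d x y).
Proof. by rewrite -sqrtrM // ler_wsqrtr. Qed.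

Lemma plam_map x : p (h x) <= (1 + Num.sqrt c + Num.sqrt (d (h x0) x0)) * p x.
Proof.
have sqrt_dhx : Num.sqrt (d (h x) x0) <=
    Num.sqrt c * Num.sqrt (d x x0) + Num.sqrt (d (h x0) x0).
  apply: le_trans (_ : Num.sqrt (c * d x x0 + d (h x0) x0) <= _).
    by rewrite ler_wsqrtr // (le_trans (d_triangle d_metric _ (h x0) _)) ?lerD2r.
  by rewrite -sqrtrM // sqrtrD_le ?mulr_ge0.
rewrite /plam; set s := Num.sqrt c; set q := Num.sqrt (d (h x0) x0).
set D := Num.sqrt (d x x0) in sqrt_dhx *.
have s0 : 0 <= s := sqrtr_ge0 c; have q0 : 0 <= q := sqrtr_ge0 _.
have lamD0 : 0 <= lam * D by rewrite mulr_ge0 ?sqrtr_ge0 ?ltW.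
have : lam * Num.sqrt (d (h x) x0) <= lam * (s * D + q) by rewrite ler_pM2l.
have : lam * q <= q by rewrite ler_piMl.
have := mulr_ge0 s0 lamD0; have := mulr_ge0 q0 lamD0; nra.
Qed.

Lemma plam_map_sqr x : p (h x) ^+ 2 <= 3 * (1 + c + d (h x0) x0) * p x ^+ 2.
Proof.
have p_ge0 z : 0 <= p z by rewrite ltW // plam_gt0.
apply: le_trans (_ : ((1 + Num.sqrt c + Num.sqrt (d (h x0) x0)) * p x) ^+ 2 <= _).
  by rewrite lerXn2r ?nnegrE ?plam_map // mulr_ge0 // !addr_ge0 ?sqrtr_ge0.
rewrite exprMn ler_wpM2r ?exprn_ge0 //.
by rewrite -{2}[c]sqr_sqrtr // -{2}[d _ _]sqr_sqrtr // sqr_add3_le.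
Qed.

End Weight.

Section WeightedNorm.
Context {R : realType} {E : pointedType} (d : E -> E -> R) (x0 : E) (lam : R).
Hypothesis d_metric : is_metric d.
Hypothesis lam01 : 0 < lam <= 1.
Local Notation p := (plam d x0 lam).
Implicit Types (f : E -> R[i]) (n : nat).

Let p_gt0 := plam_gt0 d x0 lam01.

Lemma mgam_ge0 gam f : (exists x y : E, x <> y) -> (0 <= mgam d x0 lam gam f)%E.
Proof.
move=> [x [y xy]]; apply: le_trans (ereal_sup_ubound _); last by exists x, y.
by rewrite lee_fin divr_ge0 ?cmod_ge0 ?mulr_ge0 ?sqrtr_ge0 ?powR_ge0.
Qed.

Lemma absgam_ge0 gam f : (0 <= absgam d x0 lam gam f)%E.
Proof.
apply: le_trans (ereal_sup_ubound _); last by exists x0.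
by rewrite lee_fin divr_ge0 ?cmod_ge0 ?powR_ge0.
Qed.

Lemma mgam_holder n f x y : (mgam d x0 lam n%:R f < +oo)%E ->
  cmod (f x - f y) <=
    fine (mgam d x0 lam n%:R f) * (Num.sqrt (d x y) * (p x * p y) ^+ n).
Proof.
have [<-|xy] := pselect (x = y).
  by rewrite subrr /cmod /= expr0n /= addr0 sqrtr0 d_xx // sqrtr0 mul0r mulr0.
have den_gt0 : 0 < Num.sqrt (d x y) * (p x * p y) ^+ n.
  by rewrite mulr_gt0 ?exprn_gt0 ?mulr_gt0 // sqrtr_gt0 d_gt0.
have ratio_le : ((cmod (f x - f y) / (Num.sqrt (d x y) * (p x * p y) ^+ n))%:E
    <= mgam d x0 lam n%:R f)%E.
  apply: ereal_sup_ubound; exists x, y; split => //.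
  by rewrite !powR_plam // exprMn mulrA.
move=> mgam_fin; rewrite -ler_pdivrMr // -lee_fin fineK //.
by rewrite fin_numElt mgam_fin andbT (lt_le_trans (ltNyr _) ratio_le).
Qed.

Lemma absgam_growth n f x : (absgam d x0 lam n%:R f < +oo)%E ->
  cmod (f x) <= fine (absgam d x0 lam n%:R f) * p x ^+ n.+1.
Proof.
move=> absgam_fin; rewrite -ler_pdivrMr ?exprn_gt0 // -lee_fin fineK.
  by apply: ereal_sup_ubound; exists x => //; rewrite natr1 powR_plam.
by rewrite ge0_fin_numE ?absgam_ge0.
Qed.

Lemma mgam_le n f M :
  (forall x y, cmod (f x - f y) <= M * (Num.sqrt (d x y) * (p x * p y) ^+ n)) ->
  (mgam d x0 lam n%:R f <= M%:E)%E.
Proof.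
move=> f_holder; apply: ge_ereal_sup => _ [x [y [xy ->]]].
rewrite lee_fin !powR_plam // ler_pdivrMr; last first.
  by rewrite !mulr_gt0 ?exprn_gt0 // sqrtr_gt0 d_gt0.
by rewrite -mulrA -exprMn; apply: f_holder.
Qed.

Lemma absgam_le n f M : (forall x, cmod (f x) <= M * p x ^+ n.+1) ->
  (absgam d x0 lam n%:R f <= M%:E)%E.
Proof.
move=> f_growth; apply: ge_ereal_sup => _ [x _ <-].
by rewrite lee_fin natr1 powR_plam // ler_pdivrMr ?exprn_gt0 //; apply: f_growth.
Qed.

Lemma inL_bounds f : (exists x y : E, x <> y) -> inL d x0 lam 1 f ->
  exists m a, [/\ 0 <= m, 0 <= a, normL d x0 lam 1 f = (m + a)%:E,
    forall x y, cmod (f x - f y) <= m * (Num.sqrt (d x y) * (p x * p y) ^+ 1) &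
    forall x, cmod (f x) <= a * p x ^+ 2].
Proof.
move=> two_points; rewrite /inL /normL => normL_fin.
have mgam0 := mgam_ge0 1 f two_points; have absgam0 := absgam_ge0 1 f.
have mgam_fin : (mgam d x0 lam 1 f < +oo)%E.
  by apply: le_lt_trans normL_fin; rewrite leeDl.
have absgam_fin : (absgam d x0 lam 1 f < +oo)%E.
  by apply: le_lt_trans normL_fin; rewrite leeDr.
exists (fine (mgam d x0 lam 1 f)), (fine (absgam d x0 lam 1 f)); split.
- by rewrite fine_ge0.
- by rewrite fine_ge0.
- by rewrite EFinD !fineK // ge0_fin_numE.
- by move=> x y; apply: (@mgam_holder 1).
- by move=> x; apply: (@absgam_growth 1).
Qed.

End WeightedNorm.

Section Perturbation.
Context {R : realType} {E : pointedType} (d : E -> E -> R) (x0 : E) (lam : R).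
Hypothesis d_metric : is_metric d.
Hypothesis lam01 : 0 < lam <= 1.
Local Notation p := (plam d x0 lam).
Variables (f : E -> R[i]) (m a : R) (xi : E -> R) (C t : R).
Hypotheses (m_ge0 : 0 <= m) (a_ge0 : 0 <= a) (C_ge0 : 0 <= C).
Hypothesis f_holder :
  forall z w, cmod (f z - f w) <= m * (Num.sqrt (d z w) * (p z * p w) ^+ 1).
Hypothesis f_growth : forall z, cmod (f z) <= a * p z ^+ 2.
Hypothesis xi_lip : forall z w, `|xi z - xi w| <= C * d z w.

Definition perturbation z := (expi (t * xi z) - 1) * f z.

Definition growth_const := `|xi x0| + C / lam ^+ 2.
Definition holder_const := 2 * growth_const + 4 * C / lam.

Let lam_gt0 : 0 < lam. Proof. by case/andP: lam01. Qed.
Let p_ge1 := plam_ge1 d x0 lam01.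
Let p_ge0 z : 0 <= p z. Proof. exact: le_trans ler01 (p_ge1 z). Qed.

Lemma growth_const_ge0 : 0 <= growth_const.
Proof. by rewrite addr_ge0 // divr_ge0 // exprn_ge0 // ltW. Qed.

Lemma holder_const_ge0 : 0 <= holder_const.
Proof.
apply: addr_ge0; first by rewrite mulr_ge0 ?growth_const_ge0.
by rewrite divr_ge0 ?mulr_ge0 // ltW.
Qed.

Lemma xi_growth z : `|xi z| <= growth_const * p z ^+ 2.
Proof.
have xi_le : `|xi z| <= `|xi x0| + C * d z x0.
  rewrite -[xi z](subrK (xi x0)) (le_trans (ler_normD _ _)) // addrC lerD2l.
  exact: xi_lip.
have d_le : d z x0 <= p z ^+ 2 / lam ^+ 2.
  rewrite ler_pdivlMr ?exprn_gt0 // -[d z x0]sqr_sqrtr ?(d_ge0 d_metric) //.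
  rewrite -exprMn lerXn2r ?nnegrE ?p_ge0 //; last first.
    by rewrite mulrC; exact: sqrt_d_le_plam.
  by rewrite mulr_ge0 ?sqrtr_ge0 // ltW.
apply: le_trans xi_le _; rewrite /growth_const mulrDl; apply: lerD.
- by rewrite ler_peMr // exprn_ege1.
- by rewrite -mulrA; apply: ler_wpM2l => //; rewrite mulrC.
Qed.

Lemma cmod_expi_sub1_le z :
  cmod (expi (t * xi z) - 1) <= 2 * `|t| * (growth_const * p z ^+ 2).
Proof.
apply: le_trans (cmod_expi_sub1 _) _; rewrite normrM -mulrA.
by apply: ler_wpM2l => //; apply: ler_wpM2l => //; exact: xi_growth.
Qed.

Lemma cmod_perturbation z :
  cmod (perturbation z) <= 2 * growth_const * a * `|t| * p z ^+ 4.
Proof.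
rewrite cmodM; apply: le_trans (ler_pM (cmod_ge0 _) (cmod_ge0 _)
  (cmod_expi_sub1_le z) (f_growth z)) _.
by rewrite [leRHS](_ : _ = 2 * `|t| * (growth_const * p z ^+ 2) * (a * p z ^+ 2));
  last by ring.
Qed.

Lemma cmod_expiB_le z w :
  cmod (expi (t * xi z) - expi (t * xi w)) <= 2 * `|t| * (C * d z w).
Proof.
rewrite (le_trans (cmod_expiB _ _)) // -mulrBr normrM -mulrA.
by apply: ler_wpM2l => //; apply: ler_wpM2l => //; exact: xi_lip.
Qed.

Let plam_exp3M_le z w : p z ^+ 3 * p w <= (p z * p w) ^+ 3.
Proof.
by rewrite exprMn; apply: ler_wpM2l; [exact: exprn_ge0 | exact: ler_eXnr].
Qed.

Lemma cmod_expi_sub1_fB z w :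
  cmod (expi (t * xi z) - 1) * cmod (f z - f w) <=
    2 * growth_const * m * (`|t| * Num.sqrt (d z w) * (p z * p w) ^+ 3).
Proof.
apply: le_trans (ler_pM (cmod_ge0 _) (cmod_ge0 _)
  (cmod_expi_sub1_le z) (f_holder z w)) _.
rewrite [leLHS](_ : _ = (2 * growth_const * m * `|t| * Num.sqrt (d z w)) *
  (p z ^+ 3 * p w)); last by ring.
rewrite [leRHS](_ : _ = (2 * growth_const * m * `|t| * Num.sqrt (d z w)) *
  (p z * p w) ^+ 3); last by ring.
apply: ler_wpM2l; last exact: plam_exp3M_le z w.
by rewrite !mulr_ge0 ?sqrtr_ge0 ?growth_const_ge0.
Qed.

(* [d <= 2 p(z) p(w) d^{1/2} / lam] turns the Lipschitz bound on the phase
   into a 1/2-Hoelder bound. *)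
Lemma cmod_expiB_f z w :
  cmod (expi (t * xi z) - expi (t * xi w)) * cmod (f w) <=
    4 * C / lam * a * (`|t| * Num.sqrt (d z w) * (p z * p w) ^+ 3).
Proof.
apply: le_trans (ler_pM (cmod_ge0 _) (cmod_ge0 _)
  (cmod_expiB_le z w) (f_growth w)) _.
set S := Num.sqrt (d z w).
have S_le : S <= 2 * (p z * p w) / lam.
  by rewrite ler_pdivlMr // mulrC (sqrt_d_le_plamM x0 d_metric lam01).
rewrite -[d z w]sqr_sqrtr ?(d_ge0 d_metric) // -/S.
apply: le_trans (_ : (2 * `|t| * C * S * a * p w ^+ 2) * (2 * (p z * p w) / lam) <= _).
  rewrite [leLHS](_ : _ = (2 * `|t| * C * S * a * p w ^+ 2) * S); last by ring.
  by apply: ler_wpM2l => //; rewrite !mulr_ge0 ?sqrtr_ge0 ?exprn_ge0.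
rewrite [leLHS](_ : _ = (4 * C / lam * a * `|t| * S) * (p w ^+ 3 * p z)); last by ring.
rewrite [leRHS](_ : _ = (4 * C / lam * a * `|t| * S) * (p w * p z) ^+ 3);
  last by ring.
apply: ler_wpM2l; last exact: plam_exp3M_le w z.
by rewrite !mulr_ge0 ?sqrtr_ge0 ?invr_ge0 ?(ltW lam_gt0).
Qed.

Lemma cmod_perturbationB z w : cmod (perturbation z - perturbation w) <=
  holder_const * `|t| * (m + a) * (Num.sqrt (d z w) * (p z * p w) ^+ 3).
Proof.
have -> : perturbation z - perturbation w = (expi (t * xi z) - 1) * (f z - f w)
    + (expi (t * xi z) - expi (t * xi w)) * f w by rewrite /perturbation; ring.
apply: le_trans (cmodD _ _) _; rewrite !cmodM.
apply: le_trans (lerD (cmod_expi_sub1_fB z w) (cmod_expiB_f z w)) _.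
set X := `|t| * Num.sqrt (d z w) * (p z * p w) ^+ 3.
have X0 : 0 <= X by rewrite !mulr_ge0 ?sqrtr_ge0 ?exprn_ge0 ?mulr_ge0 ?p_ge0.
rewrite [leRHS](_ : _ = (2 * growth_const * m * X + 4 * C / lam * a * X) +
  (2 * growth_const * a * X + 4 * C / lam * m * X)); last first.
  by rewrite /holder_const /X; ring.
by rewrite lerDl addr_ge0 // !mulr_ge0 ?growth_const_ge0 ?invr_ge0 ?(ltW lam_gt0).
Qed.

End Perturbation.

Section Action.
Context {R : realType} {E : pointedType} (d : E -> E -> R) (x0 : E).
Context {dG : measure_display} {G : measurableType dG} (act : G -> E -> E).
Variable lam : R.
Hypothesis d_metric : is_metric d.
Hypothesis lam01 : 0 < lam <= 1.
Hypothesis two_points : exists x y : E, x <> y.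
Hypothesis act_lip : forall g, dlipschitz d (act g).
Hypothesis act_measurable : @measurable_fun _ _ (G * borelE d)%type (borelE d)
  setT (fun gx => act gx.1 gx.2).
Local Notation p := (plam d x0 lam).
Local Notation Gam := (Gam d act x0).

(* The integrand of the first half of condition (star). *)
Definition star_weight g := Gam g ^+ 3 * (1 + Num.sqrt (lipc d (act g))).

Let lipc_act_ge0 g : 0 <= lipc d (act g).
Proof. by apply: (lipc_ge0 d_metric (act_lip g)). Qed.

Let p_ge0 z : 0 <= p z. Proof. by rewrite ltW // plam_gt0. Qed.

Lemma Gam_ge1 g : 1 <= Gam g.
Proof. by rewrite /Gam -addrA lerDl addr_ge0 ?lipc_act_ge0 ?(d_ge0 d_metric). Qed.

Let Gam_ge0 g : 0 <= Gam g. Proof. exact: le_trans ler01 (Gam_ge1 g). Qed.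

Lemma Gam_exp_le_star_weight g k : (k <= 3)%N -> Gam g ^+ k <= star_weight g.
Proof.
move=> k3; apply: le_trans (_ : Gam g ^+ 3 <= _).
  exact: ler_weXn2l (Gam_ge1 g) _ _ k3.
by rewrite ler_peMr ?exprn_ge0 // lerDl sqrtr_ge0.
Qed.

Lemma star_weight_ge1 g : 1 <= star_weight g.
Proof. by rewrite (le_trans _ (Gam_exp_le_star_weight g (leq0n 3))) ?expr0. Qed.

Lemma plam_act_exp g x k :
  p (act g x) ^+ (2 * k) <= (3 * Gam g) ^+ k * p x ^+ (2 * k).
Proof.
rewrite !exprM -exprMn lerXn2r ?nnegrE ?exprn_ge0 ?mulr_ge0 ?p_ge0 //.
exact: plam_map_sqr (lipc_act_ge0 g) (lipc_le d_metric (act_lip g)) x.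
Qed.

Lemma plam_actM g x y : p (act g x) * p (act g y) <= 3 * Gam g * (p x * p y).
Proof.
have sq_le : (p (act g x) * p (act g y)) ^+ 2 <= (3 * Gam g * (p x * p y)) ^+ 2.
  have -> : (3 * Gam g * (p x * p y)) ^+ 2 =
    ((3 * Gam g) ^+ 1 * p x ^+ (2 * 1)) * ((3 * Gam g) ^+ 1 * p y ^+ (2 * 1)) by ring.
  rewrite exprMn; apply: ler_pM; rewrite ?exprn_ge0 ?p_ge0 //.
    exact: (plam_act_exp g x 1).
  exact: (plam_act_exp g y 1).
by move: sq_le; rewrite ler_sqr ?nnegrE ?mulr_ge0 ?p_ge0 ?Gam_ge0.
Qed.

Lemma cmod_act_growth (psi : E -> R[i]) (K : R) (k : nat) g x :
  (k <= 3)%N -> 0 <= K -> (forall z, cmod (psi z) <= K * p z ^+ (2 * k)) ->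
  cmod (psi (act g x)) <= 3 ^+ k * K * p x ^+ (2 * k) * star_weight g.
Proof.
move=> k3 K0 psi_growth; apply: le_trans (psi_growth _) _.
apply: le_trans (_ : K * ((3 * Gam g) ^+ k * p x ^+ (2 * k)) <= _).
  exact: ler_wpM2l K0 _ _ (plam_act_exp g x k).
rewrite (_ : K * _ = 3 ^+ k * K * p x ^+ (2 * k) * Gam g ^+ k); last first.
  by rewrite exprMn; ring.
apply: ler_wpM2l; first by rewrite !mulr_ge0 ?exprn_ge0.
exact: Gam_exp_le_star_weight.
Qed.

Lemma cmod_act_holder (psi : E -> R[i]) (K : R) g x y : 0 <= K ->
  (forall z w, cmod (psi z - psi w) <= K * (Num.sqrt (d z w) * (p z * p w) ^+ 3)) ->
  cmod (psi (act g x) - psi (act g y)) <=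
    27 * K * (Num.sqrt (d x y) * (p x * p y) ^+ 3) * star_weight g.
Proof.
move=> K0 psi_holder; apply: le_trans (psi_holder _ _) _.
set s := Num.sqrt (lipc d (act g)).
have sqrt_d_le : Num.sqrt (d (act g x) (act g y)) <= s * Num.sqrt (d x y).
  exact: sqrt_d_map (lipc_act_ge0 g) (lipc_le d_metric (act_lip g)) x y.
have pp_le : (p (act g x) * p (act g y)) ^+ 3 <= (3 * Gam g * (p x * p y)) ^+ 3.
  by apply: lerXn2r; rewrite ?nnegrE ?mulr_ge0 ?p_ge0 ?Gam_ge0 ?plam_actM.
apply: le_trans (_ : K * (s * Num.sqrt (d x y) * (3 * Gam g * (p x * p y)) ^+ 3) <= _).
  apply: ler_wpM2l K0 _ _ _; apply: ler_pM => //;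
    by rewrite ?sqrtr_ge0 ?exprn_ge0 ?mulr_ge0 ?p_ge0.
rewrite (_ : K * _ = 27 * K * (Num.sqrt (d x y) * (p x * p y) ^+ 3) * (s * Gam g ^+ 3));
  last by ring.
apply: ler_wpM2l; first by rewrite !mulr_ge0 ?sqrtr_ge0 ?exprn_ge0 ?mulr_ge0 ?p_ge0.
rewrite /star_weight mulrC; apply: ler_wpM2l; first by rewrite exprn_ge0.
by rewrite lerDr.
Qed.

Lemma measurable_parts_act (psi : E -> R[i]) (K : R) (n : nat) x :
  (forall z w, cmod (psi z - psi w) <= K * (Num.sqrt (d z w) * (p z * p w) ^+ n)) ->
  measurable_parts (fun g => psi (act g x)).
Proof.
move=> psi_holder.
have act_x := measurableT_comp act_measurable (@pair2_measurable _ _ G (borelE d) x).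
have mRe : @measurable_fun _ _ (borelE d) R setT (fun z => complex.Re (psi z)).
  apply: (weighted_holder_measurable d_metric lam01 (K := K) (n := n)) => z w.
  by rewrite -raddfB (le_trans (normr_Re_le _)).
have mIm : @measurable_fun _ _ (borelE d) R setT (fun z => complex.Im (psi z)).
  apply: (weighted_holder_measurable d_metric lam01 (K := K) (n := n)) => z w.
  by rewrite -raddfB (le_trans (normr_Im_le _)).
by split; [exact: measurableT_comp mRe act_x | exact: measurableT_comp mIm act_x].
Qed.

Variables (P : probability G R) (I : R).
Hypothesis integral_star : (\int[P]_g (star_weight g)%:E = I%:E)%E.
Variables (f : E -> R[i]) (m a : R) (xi : E -> R) (C t : R).
Hypotheses (m_ge0 : 0 <= m) (a_ge0 : 0 <= a) (C_ge0 : 0 <= C).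
Hypothesis f_holder :
  forall z w, cmod (f z - f w) <= m * (Num.sqrt (d z w) * (p z * p w) ^+ 1).
(* The exponent [2 * 1] matches the form [2 * k] of [cmod_act_growth]. *)
Hypothesis f_growth : forall z, cmod (f z) <= a * p z ^+ (2 * 1).
Hypothesis xi_lip : forall z w, `|xi z - xi w| <= C * d z w.

Local Notation u := (perturbation f xi t).
Local Notation F x := (Qt act P xi t f x - Qop act P f x).
Let A := growth_const x0 lam xi C.
Let B := holder_const x0 lam xi C.
Let A_ge0 : 0 <= A := growth_const_ge0 x0 lam01 xi C_ge0.
Let B_ge0 : 0 <= B := holder_const_ge0 x0 lam01 xi C_ge0.

Let u_holder z w : cmod (u z - u w) <=
  (B * `|t| * (m + a)) * (Num.sqrt (d z w) * (p z * p w) ^+ 3).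
Proof. exact: cmod_perturbationB. Qed.

Let u_growth z : cmod (u z) <= (2 * A * a * `|t|) * p z ^+ (2 * 2).
Proof. exact: cmod_perturbation. Qed.

Let parts_u x : measurable_parts (fun g => u (act g x)).
Proof. exact: measurable_parts_act x u_holder. Qed.

Let parts_f x : measurable_parts (fun g => f (act g x)).
Proof. exact: measurable_parts_act x f_holder. Qed.

Lemma Qt_sub_Qop x : F x = Cint P (fun g => u (act g x)).
Proof.
have ef_u z : expi (t * xi z) * f z = u z + f z.
  by rewrite /perturbation mulrBl mul1r subrK.
have ef_growth z : cmod (expi (t * xi z) * f z) <= a * p z ^+ (2 * 1).
  by rewrite cmodM cmod_expi mul1r.
rewrite /Qt /Qop (CintB integral_star).
- by congr Cint; apply: funext => g; rewrite ef_u addrK.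
- by rewrite (_ : (fun g => _) = fun g => u (act g x) + f (act g x));
    [exact: measurable_partsD | apply: funext => g; rewrite ef_u].
- exists (3 ^+ 1 * a * p x ^+ (2 * 1)); first by rewrite !mulr_ge0 ?exprn_ge0.
  by move=> g; exact: (cmod_act_growth (k := 1)) g x isT a_ge0 ef_growth.
- exact: parts_f.
- exists (3 ^+ 1 * a * p x ^+ (2 * 1)); first by rewrite !mulr_ge0 ?exprn_ge0.
  by move=> g; exact: (cmod_act_growth (k := 1)) g x isT a_ge0 f_growth.
Qed.

Let I_ge0 : 0 <= I.
Proof.
apply: dominating_integral_ge0 integral_star => g.
exact: le_trans ler01 (star_weight_ge1 g).
Qed.

Let u_act_le x g : cmod (u (act g x)) <=
  3 ^+ 2 * (2 * A * a * `|t|) * p x ^+ (2 * 2) * star_weight g.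
Proof.
by apply: (cmod_act_growth (k := 2)) g x isT _ u_growth; rewrite !mulr_ge0.
Qed.

Lemma cmod_Qt_sub_Qop x : cmod (F x) <= 36 * A * I * `|t| * a * p x ^+ 4.
Proof.
rewrite Qt_sub_Qop.
apply: le_trans (cmod_Cint_le integral_star (parts_u x) _ (u_act_le x)) _.
  by rewrite !mulr_ge0 ?exprn_ge0.
by rewrite [leRHS](_ : _ = 2 * (3 ^+ 2 * (2 * A * a * `|t|) * p x ^+ (2 * 2)) * I);
  last by ring.
Qed.

Lemma cmod_Qt_sub_QopB x y : cmod (F x - F y) <=
  54 * B * I * `|t| * (m + a) * (Num.sqrt (d x y) * (p x * p y) ^+ 3).
Proof.
have K0 : 0 <= B * `|t| * (m + a).
  exact: mulr_ge0 (mulr_ge0 B_ge0 (normr_ge0 t)) (addr_ge0 m_ge0 a_ge0).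
have dom z : dominated star_weight (fun g => u (act g z)).
  by exists (3 ^+ 2 * (2 * A * a * `|t|) * p z ^+ (2 * 2));
    [rewrite !mulr_ge0 ?exprn_ge0 | exact: u_act_le].
have domB g : cmod (u (act g x) - u (act g y)) <=
    27 * (B * `|t| * (m + a)) * (Num.sqrt (d x y) * (p x * p y) ^+ 3) * star_weight g.
  exact: cmod_act_holder g x y K0 u_holder.
rewrite !Qt_sub_Qop (CintB integral_star (parts_u x) (dom x) (parts_u y) (dom y)).
apply: le_trans (cmod_Cint_le integral_star _ _ domB) _.
- exact: measurable_partsB.
- apply: mulr_ge0; first exact: mulr_ge0 (ler0n _ 27) K0.
  exact: mulr_ge0 (sqrtr_ge0 _) (exprn_ge0 3 (mulr_ge0 (p_ge0 x) (p_ge0 y))).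
- by rewrite [leRHS](_ : _ = 2 * (27 * (B * `|t| * (m + a)) *
    (Num.sqrt (d x y) * (p x * p y) ^+ 3)) * I); last by ring.
Qed.

Lemma normL_Qt_sub_Qop_le : (normL d x0 lam 3 (fun x => F x) <=
  ((54 * B + 36 * A) * I * `|t| * (m + a))%:E)%E.
Proof.
rewrite /normL mulrDl mulrDl mulrDl EFinD; apply: leeD.
- by apply: mgam_le => // x y; apply: le_trans (cmod_Qt_sub_QopB x y) _.
- apply: absgam_le => // x; apply: le_trans (cmod_Qt_sub_Qop x) _.
  apply: ler_wpM2r; first exact: exprn_ge0 (p_ge0 x).
  by apply: ler_wpM2l; [rewrite !mulr_ge0 | rewrite lerDr].
Qed.

End Action.

Theorem lemma3p3 (R : realType) (E : pointedType) (d : E -> E -> R) (x0 : E)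
  (dG : measure_display) (G : measurableType dG) (act : G -> E -> E)
  (P : probability G R) (xi : E -> R) (lam : R) :
  is_metric d ->
  compact_closed_balls d ->
  ~ dcompact d setT ->
  (* G is a semigroup of Lipschitz maps of E acting measurably *)
  injective act ->
  (forall g h, exists k, act k = act g \o act h) ->
  (forall g, dlipschitz d (act g)) ->
  @measurable_fun _ _ (G * borelE d)%type (borelE d) setT
    (fun p => act p.1 p.2) ->
  (* condition star with n0 = 1 *)
  (integral P setT (fun g => ((Gam d act x0 g) ^+ 3
               * (1 + Num.sqrt (lipc d (act g))))%:E) < +oo)%E ->
  (integral P setT (fun g => (Num.sqrt (lipc d (act g))
               * (Num.max (lipc d (act g)) 1) ^+ 3)%:E) < 1%:E)%E ->
  (* xi is Lipschitz *)
  (exists C : R, forall x y, `|xi x - xi y| <= C * d x y) ->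
  0 < lam <= 1 ->
  exists K : R, 0 < K /\
    forall f : E -> R[i], inL d x0 lam 1 f ->
    forall t : R,
      (normL d x0 lam 3 (fun x : E => (Qt act P xi t f x - Qop act P f x)%R)
        <= (K * `|t|)%:E * normL d x0 lam 1 f)%E.
Proof.
move=> d_metric _ noncompact _ _ act_lip act_measurable star_fin _ [C xi_lip] lam01.
have two_points := noncompact_two_points noncompact.
have star_ge0 g : 0 <= star_weight d x0 act g.
  exact: le_trans ler01 (star_weight_ge1 x0 d_metric two_points act_lip g).
have star_fin_num : (\int[P]_g (star_weight d x0 act g)%:E)%E \is a fin_num.
  by rewrite ge0_fin_numE // integral_ge0 // => g _; rewrite lee_fin.
set I := fine (\int[P]_g (star_weight d x0 act g)%:E)%E.
have integral_star : (\int[P]_g (star_weight d x0 act g)%:E)%E = I%:E by rewrite fineK.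
have I_ge0 : 0 <= I := dominating_integral_ge0 star_ge0 integral_star.
have xi_lip' x y : `|xi x - xi y| <= `|C| * d x y.
  exact: le_trans (xi_lip x y) (ler_wpM2r (d_ge0 d_metric x y) (ler_norm C)).
set K0 := (54 * holder_const x0 lam xi `|C| + 36 * growth_const x0 lam xi `|C|) * I.
have K0_ge0 : 0 <= K0.
  rewrite mulr_ge0 // addr_ge0 // mulr_ge0 //.
    exact: holder_const_ge0.
  exact: growth_const_ge0.
exists (K0 + 1); split=> [|f f_inL t]; first by rewrite ltr_wpDl.
have [m [a [m_ge0 a_ge0 -> f_holder f_growth]]] :=
  inL_bounds d_metric lam01 two_points f_inL.
apply: le_trans (normL_Qt_sub_Qop_le d_metric lam01 two_points act_lip act_measurable
  integral_star t m_ge0 a_ge0 (normr_ge0 C) f_holder f_growth xi_lip') _.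
rewrite -EFinM lee_fin; apply: ler_wpM2r; first exact: addr_ge0.
by apply: ler_wpM2r => //; rewrite lerDl.
Qed.
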